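(* Let $K$ be a non-Archimedean locally compact field of characteristic $p>0$ with group of 1-units $U=1+M_K$. Let $f:U\to U$ be a locally analytic group endomorphism with $f(1+x)=\sum_{n=0}^{\infty}a_nx^n$ for all $x\in M_K$, where $\sum a_nx^n\in 1+x\mathbb{F}_p[[x]]$. If the sequence $\{a_n\}_{n\ge0}$ is ultimately periodic, then $f(1+x)=(1+x)^N$ for some integer $N$.
   Context: $M_K$ is the maximal ideal of the ring of integers $R_K$ of $K$; with constant field $\mathbb{F}$ of order $q$ and uniformizer $\pi$, $K=\mathbb{F}((\pi))$, $U=1+\pi\mathbb{F}[[\pi]]$, and $|x|=q^{-v(x)}$. A continuous function $f$ on a ball $B_{\alpha,t}=\{u\in R_K:|u-\alpha|\le t\}$, $t=|\rho|$, is analytic there if $f(u)=\sum_{n\ge0}c_n\left(\frac{u-\alpha}{\rho}\right)^n$ with $c_n\in K$, $c_n\to0$; $f:U\to K$ is locally analytic if each $\alpha\in U$ has a ball $B_{\alpha,t_\alpha}\subset U$, $t_\alpha>0$, on which $f$ is analytic. A sequence $\{s_n\}$ is ultimately periodic if there are integers $r>0$, $w\ge0$ with $s_{n+r}=s_n$ for all $n\ge w$. *)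

(* K = F((pi)) with F a finite field; we work with the
   valuation ring R_K = F[[pi]], whose elements are represented by their
   coefficient sequences  nat -> F  (s i = coefficient of pi^i). *)
From HB Require Import structures.
From mathcomp Require Import all_boot all_order all_algebra.
Set Implicit Arguments. Unset Strict Implicit. Unset Printing Implicit Defensive.
Import Order.TTheory GRing.Theory Num.Theory.
Local Open Scope ring_scope.

Section Ser.
Variable F : finFieldType.

Definition ser := nat -> F.

Definition ser_const (c : F) : ser := fun n => if n == 0%N then c else 0.
Definition ser_one : ser := ser_const 1.
Definition ser_add (s t : ser) : ser := fun n => s n + t n.
Definition ser_mul (s t : ser) : ser :=
  fun n => \sum_(i < n.+1) s i * t (n - i)%N.
Definition ser_exp (s : ser) (n : nat) : ser := iter n (ser_mul s) ser_one.
Definition ser_pi (k : nat) : ser := fun n => (n == k)%:R.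

Definition inM (s : ser) : Prop := s 0%N = 0.
Definition inU (s : ser) : Prop := s 0%N = 1.

Definition ser_cvg (S : nat -> ser) (T : ser) : Prop :=
  forall j : nat, exists N : nat, forall M : nat, (N <= M)%N ->
    forall i : nat, (i <= j)%N -> S M i = T i.

Definition ser_to0 (c : nat -> ser) : Prop :=
  forall j : nat, exists N : nat, forall n : nat, (N <= n)%N ->
    forall i : nat, (i <= j)%N -> c n i = 0.

Definition psum (c : nat -> ser) (w : ser) (M : nat) : ser :=
  fun i => \sum_(n < M) ser_mul (c n) (ser_exp w n) i.

Definition ser_series_eq (c : nat -> ser) (w : ser) (T : ser) : Prop :=
  ser_cvg (psum c w) T.

(* f is analytic on the ball B_{alpha,|rho|} = {alpha + rho w : w in R_K}:
   f(alpha + rho w) = sum_n c_n w^n with c_n in K, c_n -> 0.  Writing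
   c_n = pi^{-m} d_n with d_n in R_K (possible since (c_n) is bounded),
   this is  pi^m f(alpha + rho w) = sum_n d_n w^n,  d_n -> 0. *)
Definition analytic_on_ball (f : ser -> ser) (alpha rho : ser) : Prop :=
  exists m : nat, exists d : nat -> ser,
    ser_to0 d /\
    forall w : ser,
      ser_series_eq d w (ser_mul (ser_pi m) (f (ser_add alpha (ser_mul rho w)))).

(* f : U -> K locally analytic: each alpha in U has a ball of positive radius
   |rho|, contained in U (i.e. rho in M_K, rho <> 0), on which f is analytic. *)
Definition locally_analytic (f : ser -> ser) : Prop :=
  forall alpha : ser, inU alpha ->
    exists rho : ser, inM rho /\ (exists i, rho i != 0) /\
      analytic_on_ball f alpha rho.

Definition U_endo (f : ser -> ser) : Prop :=
  (forall u, inU u -> inU (f u)) /\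
  (forall u v, inU u -> inU v -> f (ser_mul u v) =1 ser_mul (f u) (f v)).

Definition is_zpow (v u : ser) (N : int) : Prop :=
  match N with
  | Posz n => v =1 ser_exp u n
  | Negz n => ser_mul v (ser_exp u n.+1) =1 ser_one
  end.

End Ser.

Definition ult_periodic {T : Type} (s : nat -> T) : Prop :=
  exists r : nat, (0 < r)%N /\ exists w : nat,
    forall n : nat, (w <= n)%N -> s (n + r)%N = s n.

From HB Require Import structures.
From mathcomp Require Import all_boot all_order all_algebra.
From Stdlib Require Import FunctionalExtensionality.
From mathcomp Require Import ring zify.
Set Implicit Arguments. Unset Strict Implicit. Unset Printing Implicit Defensive.
Import Order.TTheory GRing.Theory Num.Theory.
Local Open Scope ring_scope.

(* Write [A(X) = sum a_n X^n].  Ultimate periodicity gives [(1 - X^r) A = P]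
   for a polynomial [P], hence [f(1+x) (1 - x^r) = P(x)] on [M_K].  As [f] is
   multiplicative, [P(x) / (1 - x^r)] is multiplicative for the law
   [x * y = x + y + xy]; along [y = x^K] for all [K] this becomes an identity of
   bivariate polynomials, and comparing leading coefficients in [y] gives
   [(1 + X)^d (1 - X^r) = P (1 + X)^r] with [d = deg P].  Therefore
   [f(1+x) (1+x)^r = (1+x)^d], i.e. [f(1+x) = (1+x)^(d-r)].  Power series are
   compared through their truncations modulo [X^J]. *)

Section TakePoly.
Variable R : comNzRingType.
Implicit Types p q c : {poly R}.

Lemma take_polyMr J p q : take_poly J (p * take_poly J q) = take_poly J (p * q).
Proof.
by rewrite -[in RHS](poly_take_drop J q) mulrDr take_polyD mulrA take_polyMXn_0 addr0.
Qed.

Lemma take_polyMl J p q : take_poly J (take_poly J p * q) = take_poly J (p * q).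
Proof. by rewrite mulrC take_polyMr mulrC. Qed.

Lemma take_polyM2l J p q c :
  take_poly J (take_poly J p * take_poly J q * c) = take_poly J (p * q * c).
Proof. by rewrite -!mulrA take_polyMl mulrCA take_polyMl mulrCA. Qed.

Lemma take_poly_idem J p : take_poly J (take_poly J p) = take_poly J p.
Proof. by rewrite take_poly_id // size_take_poly. Qed.

Lemma take_poly_exp J p n : take_poly J (take_poly J p ^+ n) = take_poly J (p ^+ n).
Proof.
elim: n => [|n IH]; first by rewrite !expr0.
by rewrite !exprS -take_polyMr IH take_polyMr take_polyMl.
Qed.

Lemma take_poly_comp J p q : take_poly J (p \Po take_poly J q) = take_poly J (p \Po q).
Proof.
rewrite !comp_polyE !take_poly_sum; apply: eq_bigr => i _.
by rewrite !take_polyZ take_poly_exp.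
Qed.

Lemma take_poly_inj p q : (forall J, take_poly J p = take_poly J q) -> p = q.
Proof.
move=> e; have := e (maxn (size p) (size q)).
by rewrite !take_poly_id // ?leq_maxl ?leq_maxr.
Qed.

(* [p1 - p2] has [X]-adic valuation at least [M], and composing with [q],
   [q`_0 = 0], does not lower valuations. *)
Lemma take_poly_comp_congr M J p1 p2 q : take_poly M p1 = take_poly M p2 ->
  (J <= M)%N -> q`_0 = 0 -> take_poly J (p1 \Po q) = take_poly J (p2 \Po q).
Proof.
move=> e JM q0; apply/eqP; rewrite -subr_eq0 -raddfB /= -comp_polyB.
have e12 : take_poly M (p1 - p2) = 0 by rewrite raddfB /= e subrr.
rewrite -(poly_take_drop M (p1 - p2)) e12 add0r comp_polyM rmorphXn /= comp_polyX.
have q1 : take_poly 1 q = 0.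
  by apply/polyP=> -[|i]; rewrite coef_take_poly coef0 //= q0.
rewrite -(poly_take_drop 1 q) q1 add0r exprMn mulrA -exprM mul1n.
by rewrite -[in 'X^M](subnK JM) exprD mulrA take_polyMXn_0.
Qed.

Lemma take_poly_mulIr J p q c : c`_0 = 1 ->
  take_poly J (p * c) = take_poly J (q * c) -> take_poly J p = take_poly J q.
Proof.
move=> c0 e; apply/eqP; rewrite -subr_eq0 -raddfB; apply/eqP/polyP => i.
have {}e : take_poly J ((p - q) * c) = 0 by rewrite mulrBl raddfB /= e subrr.
rewrite coef_take_poly coef0; case: ltnP => // iJ.
elim/ltn_ind: i iJ => i IH iJ.
have := congr1 (fun s : {poly R} => s`_i) e; rewrite coef_take_poly iJ coef0 coefM.
rewrite big_ord_recr /= subnn c0 mulr1 big1 ?add0r // => k _.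
by rewrite IH ?mul0r // (ltn_trans (ltn_ord k)).
Qed.

Lemma comp_poly_1subXn n q : (1 - 'X^n) \Po q = 1 - q ^+ n.
Proof. by rewrite rmorphB rmorph1 rmorphXn /= comp_polyX. Qed.

Lemma comp_poly_1addX_exp n q : (1 + 'X) ^+ n \Po q = (1 + q) ^+ n.
Proof. by rewrite rmorphXn rmorphD rmorph1 /= comp_polyX. Qed.

Lemma coef0_1add_exp n q : q`_0 = 0 -> ((1 + q) ^+ n)`_0 = 1.
Proof. by move=> q0; rewrite -horner_coef0 !hornerE horner_coef0 q0 addr0 expr1n. Qed.

Lemma coef0_1sub_exp r q : (0 < r)%N -> q`_0 = 0 -> (1 - q ^+ r)`_0 = 1.
Proof.
move=> r0 q0; rewrite -horner_coef0 !hornerE horner_coef0 q0 expr0n.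
by rewrite eqn0Ngt r0 subr0.
Qed.

End TakePoly.

Section Truncation.
Variable F : finFieldType.
Implicit Types (s t x : ser F) (p q : {poly F}).

Definition trunc J s : {poly F} := \poly_(i < J) s i.
Definition ser_of_poly p : ser F := fun i => p`_i.

Lemma coef_trunc J s i : (trunc J s)`_i = if (i < J)%N then s i else 0.
Proof. exact: coef_poly. Qed.

Lemma eq_trunc J s t : s =1 t -> trunc J s = trunc J t.
Proof. by move=> e; apply/polyP=> i; rewrite !coef_trunc e. Qed.

Lemma trunc_inj s t : (forall J, trunc J s = trunc J t) -> s =1 t.
Proof.
move=> e i; have := congr1 (fun p => p`_i) (e i.+1).
by rewrite !coef_trunc ltnSn.
Qed.

Lemma take_trunc J s : take_poly J (trunc J s) = trunc J s.
Proof. by rewrite take_poly_id // size_poly. Qed.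

Lemma coef0_trunc J x : inM x -> (trunc J x)`_0 = 0.
Proof. by rewrite coef_trunc; case: (0 < J)%N. Qed.

Lemma trunc_add J s t : trunc J (ser_add s t) = trunc J s + trunc J t.
Proof. by apply/polyP=> i; rewrite coefD !coef_trunc; case: ltnP; rewrite ?addr0. Qed.

Lemma trunc_mul J s t : trunc J (ser_mul s t) = take_poly J (trunc J s * trunc J t).
Proof.
apply/polyP=> i; rewrite coef_take_poly coef_trunc coefM.
case: ltnP => // iJ; apply: eq_bigr => k _; rewrite !coef_trunc.
by rewrite !(leq_ltn_trans _ iJ) // ?leq_subr // -ltnS.
Qed.

Lemma trunc_const J c : trunc J (ser_const c) = take_poly J c%:P.
Proof. by apply/polyP=> i; rewrite coef_take_poly coef_trunc coefC; case: ltnP. Qed.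

Lemma trunc_one J : trunc J (ser_one F) = take_poly J 1.
Proof. exact: trunc_const. Qed.

Lemma trunc_exp J s n : trunc J (ser_exp s n) = take_poly J (trunc J s ^+ n).
Proof.
elim: n => [|n IH]; first by rewrite expr0 trunc_one.
by rewrite /ser_exp iterS -/(ser_exp s n) trunc_mul IH take_polyMr exprS.
Qed.

Lemma trunc_exp_add1 J x n :
  trunc J (ser_exp (ser_add (ser_one F) x) n) = take_poly J ((1 + trunc J x) ^+ n).
Proof.
rewrite trunc_exp trunc_add trunc_one -take_poly_exp take_polyD take_poly_idem.
by rewrite -take_polyD take_poly_exp.
Qed.

Lemma trunc_ser_of_poly J p : trunc J (ser_of_poly p) = take_poly J p.
Proof. by apply/polyP=> i; rewrite !coef_poly. Qed.

Lemma trunc_psum_const J (a : nat -> F) x M :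
  trunc J (psum (fun n => ser_const (a n)) x M) =
  take_poly J ((\poly_(n < M) a n) \Po trunc J x).
Proof.
have -> : trunc J (psum (fun n => ser_const (a n)) x M) =
    \sum_(n < M) trunc J (ser_mul (ser_const (a n)) (ser_exp x n)).
  apply/polyP=> i; rewrite coef_trunc coef_sum.
  case: ltnP => iJ; first by apply: eq_bigr => n _; rewrite coef_trunc iJ.
  by rewrite big1 // => n _; rewrite coef_trunc ltnNge iJ.
rewrite poly_def linear_sum take_poly_sum /=; apply: eq_bigr => n _.
rewrite trunc_mul trunc_const trunc_exp take_polyMr take_polyMl linearZ /=.
by rewrite rmorphXn /= comp_polyX mul_polyC.
Qed.

Lemma ser_of_poly_add1 q : ser_add (ser_one F) (ser_of_poly q) = ser_of_poly (1 + q).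
Proof.
apply: functional_extensionality => i.
by rewrite /ser_add /ser_of_poly coefD coef1 /ser_one /ser_const; case: (i == 0%N).
Qed.

Lemma ser_of_polyM p q : ser_mul (ser_of_poly p) (ser_of_poly q) = ser_of_poly (p * q).
Proof. by apply: functional_extensionality => i; rewrite /ser_of_poly coefM. Qed.

Lemma is_zpow_of_take s x (d r : nat) : inM x ->
  (forall J, take_poly J (trunc J s * (1 + trunc J x) ^+ r) =
             take_poly J ((1 + trunc J x) ^+ d)) ->
  is_zpow s (ser_add (ser_one F) x) (d%:Z - r%:Z).
Proof.
move=> x0 e; have c0 n J := coef0_1add_exp n (coef0_trunc J x0).
case: (leqP r d) => [rd | dr].
  rewrite subzn //=; apply trunc_inj => J; rewrite trunc_exp_add1 -(take_trunc J s).
  apply: (take_poly_mulIr (c0 r J)).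
  by rewrite e -exprD subnK.
have -> : d%:Z - r%:Z = Negz (r - d).-1 by rewrite NegzE prednK ?subn_gt0 //; lia.
rewrite /is_zpow prednK; last by rewrite subn_gt0.
apply trunc_inj => J.
rewrite trunc_mul trunc_exp_add1 take_polyMr trunc_one.
apply: (take_poly_mulIr (c0 d J)).
by rewrite -mulrA -exprD subnK 1?ltnW // e mul1r.
Qed.

End Truncation.

Section PeriodicCoefficients.
Variables (R : nzRingType) (a : nat -> R) (w r : nat).

(* The numerator of [sum a_n X^n = per_num / (1 - X^r)], see [take_periodic]. *)
Definition per_num : {poly R} := \poly_(n < w + r) a n - 'X^r * \poly_(n < w) a n.

Lemma coef0_per_num : (0 < r)%N -> per_num`_0 = a 0%N.
Proof. by move=> r0; rewrite coefB coefXnM !coef_poly r0 addn_gt0 r0 orbT subr0. Qed.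

Lemma take_periodic : (forall n, (w <= n)%N -> a (n + r)%N = a n) ->
  forall M, take_poly M ((1 - 'X^r) * \poly_(n < M) a n) = take_poly M per_num.
Proof.
move=> per M; apply/polyP=> n; rewrite !coef_take_poly; case: ltnP => // nM.
rewrite mulrBl mul1r !coefB !coefXnM !coef_poly nM.
case: (ltnP n r) => nr; first by rewrite (leq_trans nr) ?leq_addl.
rewrite (leq_ltn_trans (leq_subr r n) nM).
case: (ltnP (n - r) w) => nw.
  by move: nw; rewrite -(ltn_add2r r) (subnK nr) => ->.
have : (w + r <= n)%N by move: nw; rewrite -(leq_add2r r) (subnK nr).
rewrite leqNgt => /negbTE ->.
by rewrite -{1}(subnK nr) per // subrr subr0.
Qed.

End PeriodicCoefficients.

(* Substituting [Y := X^(B+1)] with [B] a bound on the sizes of the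
   coefficients places them in disjoint blocks of powers of [X]. *)
Lemma poly_eq0_at_Xn (R : nzRingType) (E : {poly {poly R}}) :
  (forall K, (0 < K)%N -> E.['X^K] = 0) -> E = 0.
Proof.
move=> E0; pose B := \max_(i < size E) size (E`_i)%R.
have szB i : (size (E`_i)%R <= B)%N.
  case: (ltnP i (size E)) => hi; first exact: (leq_bigmax (Ordinal hi)).
  by rewrite nth_default // size_poly0.
have {E0} := E0 B.+1 isT; rewrite horner_coef => EB.
apply/polyP => i; rewrite coef0.
have [hi | /(nth_default 0) -> //] := ltnP i (size E).
apply/polyP => j; rewrite coef0.
have [ji | /(nth_default 0) -> //] := ltnP j (size E`_i).
have := congr1 (fun p : {poly R} => p`_(B.+1 * i + j)) EB.
rewrite coef_sum coef0 (bigD1 (Ordinal hi)) //= big1 => [|l /eqP li].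
  by rewrite addr0 -exprM coefMXn ltnNge leq_addr addKn.
rewrite -exprM coefMXn; case: ltnP => // le_li; apply: nth_default.
apply: leq_trans (szB l) _; have {}li : l <> i :> nat by move=> e; apply/li/val_inj.
have jB : (j < B)%N := leq_trans ji (szB i).
have [lti | ltl] := ltnP l i; first by nia.
by move: le_li; nia.
Qed.

Lemma lead_coef_1sub (S : nzRingType) (p : {poly S}) :
  (1 < size p)%N -> lead_coef (1 - p) = - lead_coef p.
Proof. by move=> h; rewrite lead_coefDr ?lead_coefN // size_polyN size_poly1. Qed.

Section MulLaw.
Variable R : idomainType.

Lemma size_add1X : size (1 + 'X : {poly R}) = 2.
Proof. by rewrite addrC -polyC1 size_XaddC. Qed.

Lemma add1X_neq0 : (1 + 'X : {poly R}) != 0.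
Proof. by rewrite -size_poly_eq0 size_add1X. Qed.

(* [x + y + xy] is the group law of [1 + M_K] read on [x = u - 1].  Both
   sides are evaluations at [Y := X^K] of bivariate polynomials, which are
   therefore equal; their leading coefficients in [Y] give the conclusion. *)
Lemma multiplicative_ratio_pow (P : {poly R}) r : (0 < r)%N -> P != 0 ->
  (forall K, (0 < K)%N ->
    (P \Po ('X + 'X^K + 'X * 'X^K)) * (1 - 'X^r) * (1 - 'X^K ^+ r) =
    P * (P \Po 'X^K) * (1 - ('X + 'X^K + 'X * 'X^K) ^+ r)) ->
  (1 + 'X) ^+ (size P).-1 * (1 - 'X^r) = P * (1 + 'X) ^+ r.
Proof.
move=> r0 P0 mulP.
pose z : {poly {poly R}} := (1 + 'X)%:P * 'X + ('X)%:P.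
have zK K : z.['X^K] = 'X + 'X^K + 'X * 'X^K.
  by rewrite !hornerE; ring.
have size_z : size z = 2.
  by rewrite size_MXaddC polyC_eq0 (negbTE add1X_neq0) size_polyC add1X_neq0.
have lead_z : lead_coef z = 1 + 'X.
  rewrite lead_coefDl ?lead_coefMX ?lead_coefC //.
  by rewrite size_mulX ?polyC_eq0 ?add1X_neq0 // !size_polyC add1X_neq0 ltnS leq_b1.
have size_zr : (1 < size (z ^+ r))%N.
  move: r0; have := size_exp z r; rewrite size_z mul1n.
  by case: (size _) => [|[|n]] //= <-.
clearbody z.
have E0 : (P ^:P \Po z) * (1 - 'X^r)%:P * (1 - 'X^r) =
          P%:P * P ^:P * (1 - z ^+ r).
  apply/eqP; rewrite -subr_eq0; apply/eqP/poly_eq0_at_Xn => K K0.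
  by rewrite !(hornerE, horner_comp) zK -!/(_ \Po _) mulP // subrr.
move/(congr1 lead_coef): E0; rewrite !lead_coefM lead_coef_comp ?size_z //.
rewrite lead_z !lead_coef_map_inj ?size_map_polyC; try exact: polyC_inj.
rewrite !lead_coefC !lead_coef_1sub ?size_polyXn //.
rewrite !lead_coef_exp lead_coefX expr1n lead_z => e.
have l0 : - (lead_coef P)%:P != 0 by rewrite oppr_eq0 polyC_eq0 lead_coef_eq0.
apply: (mulfI l0).
transitivity ((lead_coef P)%:P * (1 + 'X) ^+ (size P).-1 * (1 - 'X^r) * -1).
  by ring.
by rewrite e; ring.
Qed.

End MulLaw.

Section SeriesEndomorphism.
Variables (F : finFieldType) (f : ser F -> ser F) (a : nat -> F) (w r : nat).
Hypothesis f_series : forall x : ser F, inM x ->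
  ser_series_eq (fun n => ser_const (a n)) x (f (ser_add (ser_one F) x)).
Hypothesis a_periodic : forall n, (w <= n)%N -> a (n + r)%N = a n.
Local Notation P := (per_num a w r).
Implicit Types (x : ser F) (q : {poly F}).

Lemma take_f_mul_1subX x J : inM x ->
  take_poly J (trunc J (f (ser_add (ser_one F) x)) * (1 - trunc J x ^+ r)) =
  take_poly J (P \Po trunc J x).
Proof.
move=> x0; have [N fN] := f_series x0 J; pose M := maxn N J.
have -> : trunc J (f (ser_add (ser_one F) x)) =
          trunc J (psum (fun n => ser_const (a n)) x M).
  apply/polyP=> i; rewrite !coef_trunc; case: ltnP => // iJ.
  by rewrite (fN _ (leq_maxl N J) i (ltnW iJ)).
rewrite trunc_psum_const take_polyMl.
have -> : (\poly_(n < M) a n \Po trunc J x) * (1 - trunc J x ^+ r) =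
          ((1 - 'X^r) * \poly_(n < M) a n) \Po trunc J x.
  by rewrite comp_polyM comp_poly_1subXn mulrC.
apply: take_poly_comp_congr (take_periodic a_periodic M) _ (coef0_trunc J x0).
exact: leq_maxr.
Qed.

Lemma take_f_poly_mul_1subX q J : q`_0 = 0 ->
  take_poly J (trunc J (f (ser_of_poly (1 + q))) * (1 - q ^+ r)) =
  take_poly J (P \Po q).
Proof.
move=> q0; have := take_f_mul_1subX J (x := ser_of_poly q) q0.
rewrite ser_of_poly_add1 trunc_ser_of_poly take_poly_comp => <-.
by rewrite -[LHS]take_polyMr -[RHS]take_polyMr !raddfB /= take_poly_exp.
Qed.

Hypothesis f_endo : U_endo f.

Lemma per_num_mul_law q1 q2 : q1`_0 = 0 -> q2`_0 = 0 ->
  (P \Po (q1 + q2 + q1 * q2)) * (1 - q1 ^+ r) * (1 - q2 ^+ r) =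
  (P \Po q1) * (P \Po q2) * (1 - (q1 + q2 + q1 * q2) ^+ r).
Proof.
move=> q10 q20; set z := q1 + q2 + q1 * q2.
have z0 : z`_0 = 0 by rewrite !coefD coef0M q10 q20 mulr0 !addr0.
have inU1 q : q`_0 = 0 -> inU (ser_of_poly (1 + q)).
  by move=> q0; rewrite /inU /ser_of_poly coefD coef1 q0 addr0.
apply: take_poly_inj => J.
pose T q := trunc J (f (ser_of_poly (1 + q))).
have Tz : T z = take_poly J (T q1 * T q2).
  rewrite -trunc_mul; apply: eq_trunc.
  have -> : 1 + z = (1 + q1) * (1 + q2) by rewrite /z; ring.
  by rewrite -ser_of_polyM; apply: f_endo.2; apply: inU1.
rewrite -[in LHS]mulrA -take_polyMl -(take_f_poly_mul_1subX J z0) take_polyMl -/(T z).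
rewrite -[in LHS]mulrA Tz take_polyMl -[RHS]take_polyM2l.
rewrite -(take_f_poly_mul_1subX J q10) -(take_f_poly_mul_1subX J q20) take_polyM2l.
by congr take_poly; rewrite /T; ring.
Qed.

Lemma take_f_mul_pow (d : nat) x J : (0 < r)%N -> inM x ->
  (1 + 'X) ^+ d * (1 - 'X^r) = P * (1 + 'X) ^+ r ->
  take_poly J (trunc J (f (ser_add (ser_one F) x)) * (1 + trunc J x) ^+ r) =
  take_poly J ((1 + trunc J x) ^+ d).
Proof.
move=> r0 x0 Pfac; have c0 := coef0_1sub_exp r0 (coef0_trunc J x0).
apply: (take_poly_mulIr c0); rewrite mulrAC -[LHS]take_polyMl take_f_mul_1subX //.
rewrite take_polyMl; congr take_poly.
have := congr1 (comp_poly (trunc J x)) Pfac.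
by rewrite !comp_polyM comp_poly_1subXn !comp_poly_1addX_exp mulrC => ->.
Qed.

End SeriesEndomorphism.

Theorem lemma2p4 (F : finFieldType) (f : ser F -> ser F) (a : nat -> F) :
  U_endo f ->
  locally_analytic f ->
  (forall n : nat, exists k : nat, a n = k%:R) ->
  a 0%N = 1 ->
  (forall x : ser F, inM x ->
     ser_series_eq (fun n => ser_const (a n)) x (f (ser_add (ser_one F) x))) ->
  ult_periodic a ->
  exists N : int, forall x : ser F, inM x ->
    is_zpow (f (ser_add (ser_one F) x)) (ser_add (ser_one F) x) N.
Proof.
move=> f_endo _ _ a0 f_series [r [r0 [w a_periodic]]].
set P := per_num a w r.
have P0 : P != 0.
  apply/eqP => P0; have := coef0_per_num a w r0.
  by rewrite -/P P0 coef0 a0 => /esym/eqP; rewrite oner_eq0.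
have Pfac : (1 + 'X) ^+ (size P).-1 * (1 - 'X^r) = P * (1 + 'X) ^+ r.
  apply: multiplicative_ratio_pow r0 P0 _ => K K0.
  have := per_num_mul_law f_series a_periodic f_endo (q1 := 'X) (q2 := 'X^K).
  by rewrite comp_polyXr; apply; rewrite ?coefX ?coefXn //; case: K K0.
exists ((size P).-1%:Z - r%:Z) => x x0.
exact: is_zpow_of_take x0 (fun J => take_f_mul_pow f_series a_periodic J r0 x0 Pfac).
Qed.
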